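(* Let $a>0$, $b>0$ and consider the equation $u_t+ax^2u_{xx}+bx^3u_{xx}^2=0$ for $t>0$, $x>0$. Let $c_1,c_2$ be arbitrary real constants and $\varepsilon,\delta\in\{1,-1\}$. Each of the following functions is an exact solution: (1) $u=c_1+\frac{a}{2b}x\left(c_2+\frac a2t-\log x\right)$; (2) $u=c_1-t+4\delta\sqrt{\frac xb}+\frac{a}{2b}x\left(c_2+\frac a2t-\log x\right)$; (3) $u=c_1+\frac{a+2\varepsilon}{2b}x\left(c_2+\frac{a-2\varepsilon}{2}t-\log x\right)$; (4) $u=\varepsilon c_1^2e^{-\varepsilon t}+4\delta c_1e^{-\frac{\varepsilon}{2}t}\sqrt{\frac xb}+\frac{a+2\varepsilon}{2b}x\left(c_2+\frac{a-2\varepsilon}{2}t-\log x\right)$; (5) $u=\frac xb\left[c_1+\left(\varepsilon+\frac{a^2}{4}\right)t-\frac a2\log x+\frac{1}{2k}\left(\delta\sqrt{1-4\varepsilon k^2}-1\right)\left(\frac1k t+\log x\right)\right]$, where $k\neq0$ if $\varepsilon=-1$, and $0<|k|\le\frac12$ if $\varepsilon=1$.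
   Context: This is the non-linear Black--Scholes equation $u_t+ax^2u_{xx}+bx^3u_{xx}^2+c(xu_x-u)=0$ with $c=0$; $\log$ denotes the natural logarithm. *)

From Stdlib Require Import Reals.
From Coquelicot Require Import Coquelicot.
Open Scope R_scope.

Definition is_BS_solution (a b : R) (u : R -> R -> R) : Prop :=
  exists ut ux uxx : R -> R -> R,
    forall t x, 0 < t -> 0 < x ->
      is_derive (fun s => u s x) t (ut t x) /\
      is_derive (fun y => u t y) x (ux t x) /\
      is_derive (fun y => ux t y) x (uxx t x) /\
      ut t x + a * x ^ 2 * uxx t x + b * x ^ 3 * (uxx t x) ^ 2 = 0.

(** All five families are instances of the ansatz
    [u = p(t) + q(t) sqrt(x/b) + (x/b) (c + mu t + nu log x)].
    Writing [x = b s^2], the left-hand side of the equation becomes the polynomial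
    [(p' + q^2/16) + (q' - (a/4 + nu/2) q) s + (mu + a nu + nu^2) s^2] in [s],
    so [u] is a solution as soon as [p' = -q^2/16], [q' = (a/4 + nu/2) q] and
    [mu + a nu + nu^2 = 0]. Each family solves these conditions: for (5), the
    coefficient [A] of [t/k + log x] is a root of [k A^2 + A + eps k = 0]. *)

From Stdlib Require Import Reals Lra.
From Coquelicot Require Import Coquelicot.
Open Scope R_scope.

Lemma is_BS_solution_ext (a b : R) (u v : R -> R -> R) :
  (forall t x, u t x = v t x) -> is_BS_solution a b v -> is_BS_solution a b u.
Proof.
intros Huv (ut & ux & uxx & Hv).
exists ut, ux, uxx; intros t x Ht Hx.
destruct (Hv t x Ht Hx) as (Dt & Dx & Dxx & Heq).
split; [| split; [| split]]; try assumption.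
- exact (is_derive_ext _ _ _ _ (fun s => eq_sym (Huv s x)) Dt).
- exact (is_derive_ext _ _ _ _ (fun y => eq_sym (Huv t y)) Dx).
Qed.

Lemma sqrt_div_square (x b : R) : 0 < b -> 0 < x -> x = b * sqrt (x / b) ^ 2.
Proof.
intros Hb Hx.
rewrite pow2_sqrt; [field; lra |].
apply Rlt_le, Rdiv_lt_0_compat; lra.
Qed.

Section SqrtLogAnsatz.

Variables (a b c mu nu : R) (p q : R -> R).
Hypothesis b_pos : 0 < b.
Hypothesis quadratic_coef : mu + a * nu + nu ^ 2 = 0.
Hypothesis p_derive : forall t : R, is_derive p t (- q t ^ 2 / 16).
Hypothesis q_derive : forall t : R, is_derive q t ((a / 4 + nu / 2) * q t).

Lemma sqrt_log_ansatz_solution :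
  is_BS_solution a b
    (fun t x => p t + q t * sqrt (x / b) + x / b * (c + mu * t + nu * ln x)).
Proof.
exists (fun t x => - q t ^ 2 / 16 + (a / 4 + nu / 2) * q t * sqrt (x / b) + x / b * mu),
  (fun t x => q t / (2 * b * sqrt (x / b)) + / b * (c + mu * t + nu * ln x) + nu / b),
  (fun t x => - q t / (4 * b ^ 2 * sqrt (x / b) ^ 3) + nu / (b * x)).
intros t x Ht Hx.
assert (Hxb : 0 < x / b) by (apply Rdiv_lt_0_compat; lra).
assert (Hs : 0 < sqrt (x / b)) by (apply sqrt_lt_R0; lra).
split; [| split; [| split]].
- auto_derive.
  + split; [eexists; apply p_derive | split; [eexists; apply q_derive | exact I]].
  + replace (Derive (fun y : R => p y) t) with (- q t ^ 2 / 16)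
      by (symmetry; apply is_derive_unique, p_derive).
    replace (Derive (fun y : R => q y) t) with ((a / 4 + nu / 2) * q t)
      by (symmetry; apply is_derive_unique, q_derive).
    ring.
- auto_derive; [repeat split; lra |].
  change (x * / b) with (x / b); field; repeat split; lra.
- auto_derive; change (x * / b) with (x / b).
  + repeat split; try lra; apply Rgt_not_eq, Rmult_lt_0_compat; lra.
  + field; repeat split; apply Rgt_not_eq; lra.
- cbv beta.
  pose proof (sqrt_div_square x b b_pos Hx) as Hx_s.
  set (s := sqrt (x / b)) in *; clearbody s; subst x.
  transitivity (s ^ 2 * (mu + a * nu + nu ^ 2)).
  + field; lra.
  + rewrite quadratic_coef; ring.
Qed.

End SqrtLogAnsatz.

Lemma log_solution (a b c1 c2 eps : R) : 0 < b ->
  is_BS_solution a b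
    (fun t x => c1 + (a + 2 * eps) / (2 * b) * x * (c2 + (a - 2 * eps) / 2 * t - ln x)).
Proof.
intros Hb.
eapply is_BS_solution_ext;
  [| apply (sqrt_log_ansatz_solution a b ((a + 2 * eps) * c2 / 2)
            ((a + 2 * eps) * (a - 2 * eps) / 4) (- (a + 2 * eps) / 2)
            (fun _ => c1) (fun _ => 0)); trivial].
- intros t x; cbv beta; field; lra.
- field.
- intro t; auto_derive; trivial; field.
- intro t; auto_derive; trivial; field.
Qed.

Lemma log_sqrt_solution (a b c1 c2 delta : R) : 0 < b -> (delta = 1 \/ delta = -1) ->
  is_BS_solution a b
    (fun t x => c1 - t + 4 * delta * sqrt (x / b)
                + a / (2 * b) * x * (c2 + a / 2 * t - ln x)).
Proof.
intros Hb Hd.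
eapply is_BS_solution_ext;
  [| apply (sqrt_log_ansatz_solution a b (a * c2 / 2) (a ^ 2 / 4) (- a / 2)
            (fun t => c1 - t) (fun _ => 4 * delta)); trivial].
- intros t x; cbv beta; field; lra.
- field.
- intro t; auto_derive; trivial; destruct Hd as [-> | ->]; field.
- intro t; auto_derive; trivial; field.
Qed.

Lemma exp_log_sqrt_solution (a b c1 c2 eps delta : R) : 0 < b ->
  (eps = 1 \/ eps = -1) -> (delta = 1 \/ delta = -1) ->
  is_BS_solution a b
    (fun t x => eps * c1 ^ 2 * exp (- eps * t)
                + 4 * delta * c1 * exp (- (eps / 2) * t) * sqrt (x / b)
                + (a + 2 * eps) / (2 * b) * x * (c2 + (a - 2 * eps) / 2 * t - ln x)).
Proof.
intros Hb He Hd.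
eapply is_BS_solution_ext;
  [| apply (sqrt_log_ansatz_solution a b ((a + 2 * eps) * c2 / 2)
            ((a + 2 * eps) * (a - 2 * eps) / 4) (- (a + 2 * eps) / 2)
            (fun t => eps * c1 ^ 2 * exp (- eps * t))
            (fun t => 4 * delta * c1 * exp (- (eps / 2) * t))); trivial].
- intros t x; cbv beta; field; lra.
- field.
- intro t; auto_derive; trivial.
  replace (- eps * t) with (- (eps / 2) * t + - (eps / 2) * t) by field.
  rewrite exp_plus.
  destruct He as [-> | ->]; destruct Hd as [-> | ->]; field.
- intro t; auto_derive; trivial; field.
Qed.

Lemma quadratic_root_coef (eps k d : R) : k <> 0 -> d ^ 2 = 1 - 4 * eps * k ^ 2 ->
  eps + 1 / (2 * k) * (d - 1) / k + (1 / (2 * k) * (d - 1)) ^ 2 = 0.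
Proof.
intros Hk Hd.
transitivity ((d ^ 2 - (1 - 4 * eps * k ^ 2)) / (4 * k ^ 2)); [field; exact Hk |].
rewrite Hd; field; exact Hk.
Qed.

Lemma linear_log_solution (a b c1 eps delta k : R) : 0 < b -> k <> 0 ->
  0 <= 1 - 4 * eps * k ^ 2 -> (delta = 1 \/ delta = -1) ->
  is_BS_solution a b
    (fun t x => x / b * (c1 + (eps + a ^ 2 / 4) * t - a / 2 * ln x
                + 1 / (2 * k) * (delta * sqrt (1 - 4 * eps * k ^ 2) - 1)
                  * (1 / k * t + ln x))).
Proof.
intros Hb Hk Hdisc Hd.
set (A := 1 / (2 * k) * (delta * sqrt (1 - 4 * eps * k ^ 2) - 1)).
assert (HA : eps + A / k + A ^ 2 = 0).
{ apply quadratic_root_coef; [exact Hk |].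
  rewrite Rpow_mult_distr, pow2_sqrt by exact Hdisc.
  destruct Hd as [-> | ->]; ring. }
eapply is_BS_solution_ext;
  [| apply (sqrt_log_ansatz_solution a b c1 (eps + a ^ 2 / 4 + A / k) (A - a / 2)
            (fun _ => 0) (fun _ => 0)); trivial].
- intros t x; cbv beta; field; split; lra.
- rewrite <- HA; field; exact Hk.
- intro t; auto_derive; trivial; field.
- intro t; auto_derive; trivial; field.
Qed.

Lemma admissible_k (eps k : R) :
  (eps = -1 /\ k <> 0) \/ (eps = 1 /\ 0 < Rabs k /\ Rabs k <= 1 / 2) ->
  k <> 0 /\ 0 <= 1 - 4 * eps * k ^ 2.
Proof.
intros [[-> Hk] | [-> [Hk_pos Hk_le]]].
- split; [exact Hk | nra].
- split.
  + intros ->; rewrite Rabs_R0 in Hk_pos; lra.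
  + rewrite <- (pow2_abs k); nra.
Qed.

Theorem mainTheorem5 :
  forall a b : R, 0 < a -> 0 < b ->
  forall c1 c2 eps delta k : R,
  (eps = 1 \/ eps = -1) -> (delta = 1 \/ delta = -1) ->
  is_BS_solution a b
    (fun t x => c1 + a / (2 * b) * x * (c2 + a / 2 * t - ln x)) /\
  is_BS_solution a b
    (fun t x => c1 - t + 4 * delta * sqrt (x / b)
                + a / (2 * b) * x * (c2 + a / 2 * t - ln x)) /\
  is_BS_solution a b
    (fun t x => c1 + (a + 2 * eps) / (2 * b) * x
                     * (c2 + (a - 2 * eps) / 2 * t - ln x)) /\
  is_BS_solution a b
    (fun t x => eps * c1 ^ 2 * exp (- eps * t)
                + 4 * delta * c1 * exp (- (eps / 2) * t) * sqrt (x / b)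
                + (a + 2 * eps) / (2 * b) * x
                    * (c2 + (a - 2 * eps) / 2 * t - ln x)) /\
  ((eps = -1 /\ k <> 0) \/ (eps = 1 /\ 0 < Rabs k /\ Rabs k <= 1 / 2) ->
   is_BS_solution a b
    (fun t x => x / b * (c1 + (eps + a ^ 2 / 4) * t - a / 2 * ln x
                + 1 / (2 * k) * (delta * sqrt (1 - 4 * eps * k ^ 2) - 1)
                  * (1 / k * t + ln x)))).
Proof.
intros a b _ Hb c1 c2 eps delta k He Hd.
split; [| split; [| split; [| split]]].
- eapply is_BS_solution_ext; [| apply (log_solution a b c1 c2 0 Hb)].
  intros t x; cbv beta; field; lra.
- now apply log_sqrt_solution.
- now apply log_solution.
- now apply exp_log_sqrt_solution.
- intros Hk; destruct (admissible_k eps k Hk) as [Hk0 Hdisc].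
  now apply linear_log_solution.
Qed.
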